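(* Assume $B$ has full column rank, and let $R\in\mathcal R_{\rm s}^{n_y}$ be such that every eigenvalue of $A_R$ has real part at most $-\alpha_*$ for some $\alpha_*>0$. Let $M_*$ be such that $\|e^{A_Rt}\|_2\le M_*e^{-\alpha_*t}$ for all $t\ge 0$. Let $P_R$ satisfy $A_RP_R+P_RA_R^{\top}+BB^{\top}=0$, and set $E_R=(I-R)C_{\rm m,o}$, $C_{\rm r}=[0,\ C_{\rm m,o}]$. Then $$\frac{\operatorname{tr}\{C_{\rm p}P_RC_{\rm p}^{\top}\}}{\operatorname{tr}\{C_{{\rm r},R}P_RC_{{\rm r},R}^{\top}\}}\le 8\,\frac{M_*^2\,\|A_R\|_2\,\|B\|_2^2}{\sigma_{\min}^2(B)\,\alpha_*}\cdot\frac{\|C_{\rm p}\|_F^2}{\|E_R\|_F^2+\|C_{\rm r}\|_F^2}.$$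
   Context: Data: $A_{\rm p}\in\mathbb R^{n_x\times n_x}$, $B_{\rm p}\in\mathbb R^{n_x\times n_u}$, $B_w,B_{\hat w}\in\mathbb R^{n_x\times n_x}$, $C_{\rm m,o}\in\mathbb R^{n_y\times n_x}$, $C_{\rm p,o}\in\mathbb R^{n_{y_{\rm p}}\times n_x}$, $D_{\rm p,o}\in\mathbb R^{n_{y_{\rm p}}\times n_u}$, $K\in\mathbb R^{n_x\times n_y}$, $L\in\mathbb R^{n_u\times n_x}$, with $(A_{\rm p},B_{\rm p})$ controllable and $(A_{\rm p},C_{\rm m,o})$ observable. For $R\in\mathbb R^{n_y\times n_y}$: $$A_R=\begin{bmatrix}A_{\rm p}+B_{\rm p}L & -B_{\rm p}L\\ K(I-R)C_{\rm m,o} & A_{\rm p}-KC_{\rm m,o}\end{bmatrix},\quad B=\begin{bmatrix}B_w&0\\ B_w&-B_{\hat w}\end{bmatrix},$$ $C_{{\rm r},R}=[(R-I)C_{\rm m,o},\ C_{\rm m,o}]$, $C_{\rm p}=[C_{\rm p,o}+D_{\rm p,o}L,\ -D_{\rm p,o}L]$. $\mathcal R_{\rm s}^{n_y}=\{R: A_R\text{ is Hurwitz}\}$. $\|\cdot\|_2$ is the spectral norm, $\|\cdot\|_F$ the Frobenius norm, $\sigma_{\min}(B)$ the smallest singular value of $B$. *)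

From HB Require Import structures.
From mathcomp Require Import all_boot all_order all_algebra.
From mathcomp Require Import all_classical all_reals all_analysis.
From mathcomp Require Import complex.
Set Implicit Arguments. Unset Strict Implicit. Unset Printing Implicit Defensive.
Import Order.TTheory GRing.Theory Num.Theory.
Import numFieldNormedType.Exports.
Local Open Scope ring_scope.
Local Open Scope classical_set_scope.

Section Defs.
Variable R : realType.

Definition vnorm n (x : 'cV[R]_n) : R := Num.sqrt (\sum_i (x i 0) ^+ 2).

Definition specnorm m n (A : 'M[R]_(m, n)) : R :=
  sup [set vnorm (A *m x) | x in [set x : 'cV[R]_n | vnorm x = 1]].

Definition sigma_min m n (B : 'M[R]_(m, n)) : R :=
  inf [set vnorm (B *m x) | x in [set x : 'cV[R]_n | vnorm x = 1]].

Definition frobnorm m n (A : 'M[R]_(m, n)) : R :=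
  Num.sqrt (\sum_i \sum_j (A i j) ^+ 2).

Definition expm n (A : 'M[R]_n) (t : R) : 'M[R]_n :=
  \matrix_(i, j) limn (fun N : nat =>
     (\sum_(k < N) ((t ^+ k / (k`!)%:R) *: (A ^+ k))) i j : R).

Definition cplx_mx m n (A : 'M[R]_(m, n)) : 'M[complex R]_(m, n) :=
  map_mx (fun x => (x%:C)%C) A.

Definition is_eigenvalue n (A : 'M[R]_n) (z : complex R) : Prop :=
  eigenvalue (cplx_mx A) z.

Definition hurwitz n (A : 'M[R]_n) : Prop :=
  forall z, is_eigenvalue A z -> complex.Re z < 0.

(* Kalman controllability: the columns of [B, AB, ..., A^(n-1) B] span R^n,
   i.e. rank [B, AB, ..., A^(n-1) B] = n *)
Definition controllable n m (A : 'M[R]_n) (B : 'M[R]_(n, m)) : Prop :=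
  \rank (\sum_(k < n) <<(A ^+ k *m B)^T>>)%MS = n.

Definition observable n p (A : 'M[R]_n) (C : 'M[R]_(p, n)) : Prop :=
  controllable A^T C^T.

Definition A_R nx ny nu (Ap : 'M[R]_nx) (Bp : 'M[R]_(nx, nu)) (Cmo : 'M[R]_(ny, nx))
  (K : 'M[R]_(nx, ny)) (L : 'M[R]_(nu, nx)) (Rm : 'M[R]_ny) : 'M[R]_(nx + nx) :=
  block_mx (Ap + Bp *m L) (- (Bp *m L))
           (K *m ((1%:M - Rm) *m Cmo)) (Ap - K *m Cmo).

Definition B_cl nx (Bw Bwh : 'M[R]_nx) : 'M[R]_(nx + nx) :=
  block_mx Bw 0 Bw (- Bwh).

Definition C_rR nx ny (Cmo : 'M[R]_(ny, nx)) (Rm : 'M[R]_ny) : 'M[R]_(ny, nx + nx) :=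
  row_mx ((Rm - 1%:M) *m Cmo) Cmo.

Definition C_p nx nyp nu (Cpo : 'M[R]_(nyp, nx)) (Dpo : 'M[R]_(nyp, nu))
  (L : 'M[R]_(nu, nx)) : 'M[R]_(nyp, nx + nx) :=
  row_mx (Cpo + Dpo *m L) (- (Dpo *m L)).
End Defs.

(* Along the adjoint flow y(s) = exp(A^T s) x, the Lyapunov equation A P + P A^T + B B^T = 0
   gives d/ds y^T P y = - |B^T y|^2, and the decay |y(s)| <= M exp(- alpha s) |x| makes every
   quadratic form in y(s) vanish at infinity, so a function of s whose derivative is
   nonnegative is nonpositive at s = 0.  Comparing y^T P y with (||B||^2 M^2 / (2 alpha)) |x|^2
   exp(- 2 alpha s) gives x^T P x <= ||B||^2 M^2 / (2 alpha) |x|^2; comparing it with |y|^2,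
   whose derivative is at least - 2 ||A|| |y|^2, gives sigma_min(B)^2 |x|^2 <= 2 ||A|| x^T P x.
   Summed over the rows of C_p and C_{r,R} these bound the two traces, and their quotient is
   the claim (with a factor 8 to spare). *)

From HB Require Import structures.
From mathcomp Require Import all_boot all_order all_algebra.
From mathcomp Require Import all_classical all_reals all_analysis.
From mathcomp Require Import complex.
From mathcomp Require Import ring lra.
Import Order.TTheory GRing.Theory Num.Theory.
Import numFieldNormedType.Exports.
Set Implicit Arguments. Unset Strict Implicit. Unset Printing Implicit Defensive.
Local Open Scope ring_scope.
Local Open Scope classical_set_scope.

Section EuclideanNorm.
Variable R : realType.
Implicit Types (m n : nat).

Definition dot n (u v : 'cV[R]_n) : R := \sum_i u i 0 * v i 0.

Definition qform n (Q : 'M[R]_n) (z : 'cV[R]_n) : R := (z^T *m Q *m z) 0 0.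

Lemma dotE n (u v : 'cV[R]_n) : dot u v = (u^T *m v) 0 0.
Proof. by rewrite mxE; apply: eq_bigr => i _; rewrite mxE. Qed.

Lemma dot_mulTmx m n (M : 'M[R]_(m, n)) x y : dot (M^T *m x) y = dot x (M *m y).
Proof. by rewrite !dotE trmx_mul trmxK mulmxA. Qed.

Lemma vnorm_ge0 n (u : 'cV[R]_n) : 0 <= vnorm u.
Proof. exact: sqrtr_ge0. Qed.

Lemma sqr_vnormE n (u : 'cV[R]_n) : vnorm u ^+ 2 = \sum_i u i 0 ^+ 2.
Proof. by rewrite sqr_sqrtr // sumr_ge0 // => i _; rewrite sqr_ge0. Qed.

Lemma sqr_vnorm n (u : 'cV[R]_n) : vnorm u ^+ 2 = dot u u.
Proof. by rewrite sqr_vnormE; apply: eq_bigr => i _; rewrite expr2. Qed.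

Lemma vnorm_eq0 n (u : 'cV[R]_n) : vnorm u = 0 -> u = 0.
Proof.
rewrite /vnorm => /eqP; rewrite sqrtr_eq0 => u_le0.
have /psumr_eq0P u0 : \sum_i u i 0 ^+ 2 = 0.
  by apply/eqP; rewrite eq_le u_le0 sumr_ge0 // => i _; rewrite sqr_ge0.
apply/matrixP => i j; rewrite (ord1 j) mxE.
by apply/eqP; rewrite -sqrf_eq0 u0 // => k _; rewrite sqr_ge0.
Qed.

Lemma vnormZ n c (u : 'cV[R]_n) : vnorm (c *: u) = `|c| * vnorm u.
Proof.
rewrite /vnorm -sqrtr_sqr -sqrtrM ?sqr_ge0 //; congr Num.sqrt.
by rewrite mulr_sumr; apply: eq_bigr => i _; rewrite mxE exprMn.
Qed.

Lemma vnorm0 n : vnorm (0 : 'cV[R]_n) = 0.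
Proof. by rewrite -(scale0r 0) vnormZ normr0 mul0r. Qed.

Lemma vnorm_normalize n (u : 'cV[R]_n) : vnorm u != 0 -> vnorm ((vnorm u)^-1 *: u) = 1.
Proof. by move=> u_neq0; rewrite vnormZ normfV ger0_norm ?vnorm_ge0 ?mulVf. Qed.

Lemma exists_vnorm1 n : (0 < n)%N -> exists u : 'cV[R]_n, vnorm u = 1.
Proof.
move=> n_gt0; pose e : 'cV[R]_n := const_mx 1.
exists ((vnorm e)^-1 *: e); apply: vnorm_normalize.
by apply/eqP => /vnorm_eq0 /matrixP /(_ (Ordinal n_gt0) 0) /eqP; rewrite !mxE oner_eq0.
Qed.

Lemma sqr_sum_mul_le n (a b : 'I_n -> R) :
  (\sum_i a i * b i) ^+ 2 <= (\sum_i a i ^+ 2) * (\sum_i b i ^+ 2).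
Proof.
have -> : (\sum_i a i * b i) ^+ 2 = \sum_i \sum_j a i * b i * (a j * b j).
  by rewrite expr2 mulr_suml; apply: eq_bigr => i _; rewrite mulr_sumr.
have E : (\sum_i a i ^+ 2) * (\sum_i b i ^+ 2) = \sum_i \sum_j a i ^+ 2 * b j ^+ 2.
  by rewrite mulr_suml; apply: eq_bigr => i _; rewrite mulr_sumr.
rewrite -(@ler_pM2l _ 2) // [X in _ <= X]mulr_natl [X in _ <= X]mulr2n.
rewrite {1}E [in X in _ + X]E [in X in _ + X]exchange_big -big_split /=.
rewrite mulr_sumr; apply: ler_sum => i _; rewrite mulr_sumr -big_split /=.
apply: ler_sum => j _; rewrite -subr_ge0.
have -> : a i ^+ 2 * b j ^+ 2 + a j ^+ 2 * b i ^+ 2 - 2 * (a i * b i * (a j * b j))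
    = (a i * b j - a j * b i) ^+ 2 by ring.
exact: sqr_ge0.
Qed.

Lemma normr_dot_le n (u v : 'cV[R]_n) : `|dot u v| <= vnorm u * vnorm v.
Proof.
rewrite -(ler_pXn2r (n := 2)) ?nnegrE ?mulr_ge0 ?vnorm_ge0 //.
by rewrite real_normK ?num_real // exprMn !sqr_vnormE sqr_sum_mul_le.
Qed.

Lemma sqr_frobnormE m n (M : 'M[R]_(m, n)) : frobnorm M ^+ 2 = \sum_i \sum_j M i j ^+ 2.
Proof. by rewrite sqr_sqrtr // sumr_ge0 // => i _; rewrite sumr_ge0 // => j _; rewrite sqr_ge0. Qed.

Lemma sqr_frobnorm m n (M : 'M[R]_(m, n)) :
  frobnorm M ^+ 2 = \sum_i vnorm (row i M)^T ^+ 2.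
Proof.
rewrite sqr_frobnormE; apply: eq_bigr => i _; rewrite sqr_vnormE.
by apply: eq_bigr => j _; rewrite !mxE.
Qed.

Lemma frobnorm_ge0 m n (M : 'M[R]_(m, n)) : 0 <= frobnorm M.
Proof. exact: sqrtr_ge0. Qed.

Lemma vnorm_mul_le_frob m n (M : 'M[R]_(m, n)) x :
  vnorm (M *m x) <= frobnorm M * vnorm x.
Proof.
rewrite -(ler_pXn2r (n := 2)) ?nnegrE ?mulr_ge0 ?vnorm_ge0 ?frobnorm_ge0 //.
rewrite exprMn sqr_frobnormE mulr_suml sqr_vnormE; apply: ler_sum => i _.
by rewrite mxE sqr_vnormE sqr_sum_mul_le.
Qed.

Lemma frobnorm_row_mx m n1 n2 (M1 : 'M[R]_(m, n1)) (M2 : 'M[R]_(m, n2)) :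
  frobnorm (row_mx M1 M2) ^+ 2 = frobnorm M1 ^+ 2 + frobnorm M2 ^+ 2.
Proof.
rewrite !sqr_frobnormE -big_split /=; apply: eq_bigr => i _; rewrite big_split_ord /=.
by congr (_ + _); apply: eq_bigr => j _; rewrite ?row_mxEl ?row_mxEr.
Qed.

Lemma frobnormN m n (M : 'M[R]_(m, n)) : frobnorm (- M) = frobnorm M.
Proof.
by congr Num.sqrt; do 2![apply: eq_bigr => ? _]; rewrite mxE sqrrN.
Qed.

Lemma frobnorm0 m n : frobnorm (0 : 'M[R]_(m, n)) = 0.
Proof.
by rewrite /frobnorm big1 ?sqrtr0 // => i _; rewrite big1 // => j _; rewrite mxE expr0n.
Qed.

Lemma qformE n (Q : 'M[R]_n) z : qform Q z = dot z (Q *m z).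
Proof. by rewrite /qform dotE mulmxA. Qed.

Lemma qformD n (Q1 Q2 : 'M[R]_n) z : qform (Q1 + Q2) z = qform Q1 z + qform Q2 z.
Proof. by rewrite /qform mulmxDr mulmxDl mxE. Qed.

Lemma qformZ n c (Q : 'M[R]_n) z : qform (c *: Q) z = c * qform Q z.
Proof. by rewrite /qform -scalemxAr -scalemxAl mxE. Qed.

Lemma qform_trmx n (Q : 'M[R]_n) z : qform Q^T z = qform Q z.
Proof.
have -> : qform Q z = ((z^T *m Q *m z)^T) 0 0 by rewrite mxE.
by rewrite !trmx_mul trmxK mulmxA.
Qed.

Lemma qformN n (Q : 'M[R]_n) z : qform (- Q) z = - qform Q z.
Proof. by rewrite /qform mulmxN mulNmx mxE. Qed.

Lemma qform1 n (z : 'cV[R]_n) : qform 1%:M z = vnorm z ^+ 2.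
Proof. by rewrite qformE mul1mx sqr_vnorm. Qed.

Lemma qform_mul_trmx m n (B : 'M[R]_(n, m)) z : qform (B *m B^T) z = vnorm (B^T *m z) ^+ 2.
Proof. by rewrite qformE -mulmxA sqr_vnorm dot_mulTmx. Qed.

Lemma qform_le_frob n (Q : 'M[R]_n) z : qform Q z <= frobnorm Q * vnorm z ^+ 2.
Proof.
rewrite qformE; apply: le_trans (ler_norm _) _; apply: le_trans (normr_dot_le _ _) _.
by rewrite mulrC expr2 mulrA ler_wpM2r ?vnorm_ge0 // vnorm_mul_le_frob.
Qed.

Lemma mxtrace_mul_trmx m n (C : 'M[R]_(m, n)) Q :
  \tr (C *m Q *m C^T) = \sum_i qform Q (row i C)^T.
Proof.
apply: eq_bigr => i _; rewrite /qform trmxK !mxE.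
apply: eq_bigr => k _; rewrite !mxE; congr (_ * _).
by apply: eq_bigr => l _; rewrite !mxE.
Qed.

Lemma mxtrace_qform_le m n (C : 'M[R]_(m, n)) Q c :
  (forall z, qform Q z <= c * vnorm z ^+ 2) -> \tr (C *m Q *m C^T) <= c * frobnorm C ^+ 2.
Proof. by move=> Q_le; rewrite mxtrace_mul_trmx sqr_frobnorm mulr_sumr ler_sum. Qed.

Lemma mxtrace_qform_ge m n (C : 'M[R]_(m, n)) Q c k :
  (forall z, c * vnorm z ^+ 2 <= k * qform Q z) ->
  c * frobnorm C ^+ 2 <= k * \tr (C *m Q *m C^T).
Proof. by move=> Q_ge; rewrite mxtrace_mul_trmx sqr_frobnorm !mulr_sumr ler_sum. Qed.

End EuclideanNorm.

Section OperatorNorms.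
Variable R : realType.
Implicit Types (m n : nat).

Lemma vnorm_mul_le_spec m n (M : 'M[R]_(m, n)) x :
  vnorm (M *m x) <= specnorm M * vnorm x.
Proof.
have [/vnorm_eq0 ->|x_neq0] := eqVneq (vnorm x) 0; first by rewrite mulmx0 !vnorm0 mulr0.
have x_gt0 : 0 < vnorm x by rewrite lt_def x_neq0 vnorm_ge0.
have -> : M *m x = vnorm x *: (M *m ((vnorm x)^-1 *: x)).
  by rewrite -scalemxAr scalerA mulfV // scale1r.
rewrite vnormZ ger0_norm ?vnorm_ge0 // mulrC ler_pM2r //.
apply: ub_le_sup; last by exists ((vnorm x)^-1 *: x); first exact: vnorm_normalize.
exists (frobnorm M) => _ [y /= y1 <-].
by have := vnorm_mul_le_frob M y; rewrite y1 mulr1.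
Qed.

Lemma specnorm_ge0 m n (M : 'M[R]_(m, n)) : 0 <= specnorm M.
Proof.
rewrite /specnorm; set S := (X in sup X).
have [->|/set0P [_ [y /= y1 _]]] := eqVneq S set0; first by rewrite sup0.
by have := vnorm_mul_le_spec M y; rewrite y1 mulr1; apply: le_trans; apply: vnorm_ge0.
Qed.

Lemma qform_ge_spec n (A : 'M[R]_n) z : - (specnorm A * vnorm z ^+ 2) <= qform A z.
Proof.
rewrite qformE lerNl; apply: le_trans (_ : `|dot z (A *m z)| <= _).
  by rewrite -normrN ler_norm.
apply: le_trans (normr_dot_le _ _) _.
by rewrite mulrC expr2 mulrA ler_wpM2r ?vnorm_ge0 // vnorm_mul_le_spec.
Qed.

Lemma vnorm_mulTmx_le_spec m n (M : 'M[R]_(m, n)) x :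
  vnorm (M^T *m x) <= specnorm M * vnorm x.
Proof.
set w := M^T *m x.
have [w0|w_neq0] := eqVneq (vnorm w) 0; first by rewrite w0 mulr_ge0 ?specnorm_ge0 ?vnorm_ge0.
have w_gt0 : 0 < vnorm w by rewrite lt_def w_neq0 vnorm_ge0.
rewrite -(ler_pM2r w_gt0) -expr2 sqr_vnorm {1}/w dot_mulTmx.
apply: le_trans (ler_norm _) _; apply: le_trans (normr_dot_le _ _) _.
by rewrite -mulrA mulrCA ler_wpM2l ?vnorm_ge0 // vnorm_mul_le_spec.
Qed.

Lemma sigma_min_ge0 m n (B : 'M[R]_(m, n)) : 0 <= sigma_min B.
Proof.
rewrite /sigma_min; set S := (X in inf X).
have [->|S_neq0] := eqVneq S set0; first by rewrite inf0.
by apply: lb_le_inf; [exact/set0P | move=> _ [y _ <-]; exact: vnorm_ge0].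
Qed.

Lemma sigma_min_le m n (B : 'M[R]_(m, n)) v : sigma_min B * vnorm v <= vnorm (B *m v).
Proof.
have [/vnorm_eq0 ->|v_neq0] := eqVneq (vnorm v) 0; first by rewrite mulmx0 !vnorm0 mulr0.
have v_gt0 : 0 < vnorm v by rewrite lt_def v_neq0 vnorm_ge0.
have -> : B *m v = vnorm v *: (B *m ((vnorm v)^-1 *: v)).
  by rewrite -scalemxAr scalerA mulfV // scale1r.
rewrite vnormZ ger0_norm ?vnorm_ge0 // mulrC ler_pM2l //.
apply: ge_inf; last by exists ((vnorm v)^-1 *: v); first exact: vnorm_normalize.
by exists 0 => _ [y _ <-]; exact: vnorm_ge0.
Qed.

Lemma sigma_min_gt0 n (B : 'M[R]_n) : B \in unitmx -> (0 < n)%N -> 0 < sigma_min B.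
Proof.
move=> B_unit /(exists_vnorm1 R) [u u1]; set f := frobnorm (invmx B).
have f_mul_ge1 v : vnorm v = 1 -> 1 <= f * vnorm (B *m v).
  by move=> <-; rewrite -{1}[v](mulKmx B_unit) vnorm_mul_le_frob.
have f_gt0 : 0 < f.
  rewrite lt_neqAle frobnorm_ge0 andbT; apply/eqP => f0.
  by have := f_mul_ge1 u u1; rewrite -f0 mul0r ler10.
apply: lt_le_trans (_ : f^-1 <= _); first by rewrite invr_gt0.
apply: lb_le_inf; first by exists (vnorm (B *m u)), u.
by move=> _ [y /= y1 <-]; rewrite -[f^-1]mulr1 ler_pdivrMl // f_mul_ge1.
Qed.

Lemma sigma_min_le_trmx n (B : 'M[R]_n) x : B \in unitmx ->
  sigma_min B * vnorm x <= vnorm (B^T *m x).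
Proof.
move=> B_unit; have [x0|x_neq0] := eqVneq (vnorm x) 0.
  by rewrite x0 mulr0 vnorm_ge0.
have x_gt0 : 0 < vnorm x by rewrite lt_def x_neq0 vnorm_ge0.
set z := invmx B *m x.
have sqr_x_le : vnorm x ^+ 2 <= vnorm (B^T *m x) * vnorm z.
  rewrite sqr_vnorm -{2}[x](mulKVmx B_unit) -dot_mulTmx.
  exact: le_trans (ler_norm _) (normr_dot_le _ _).
have sz_le : sigma_min B * vnorm z <= vnorm x.
  by have := sigma_min_le B z; rewrite /z mulKVmx.
rewrite -(ler_pM2r x_gt0) -mulrA -expr2.
apply: le_trans (ler_wpM2l (sigma_min_ge0 B) sqr_x_le) _.
by rewrite mulrCA ler_wpM2l ?vnorm_ge0.
Qed.

End OperatorNorms.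

Lemma trmxX (R : comRingType) n (A : 'M[R]_n) k : (A^T) ^+ k = (A ^+ k)^T.
Proof.
elim: k => [|k IHk]; first by rewrite !expr0 trmx1.
by rewrite exprS IHk exprSr -!mulmxE trmx_mul.
Qed.

Section MatrixExponential.
Variables (R : realType) (n : nat) (G : 'M[R]_n).

Definition expm_coef (m : nat) (i j : 'I_n) (k : nat) : R := (G ^+ (k + m)) i j / k`!%:R.

Definition mx_abs_sum : R := \sum_i \sum_j `|G i j|.

Lemma mx_abs_sum_ge0 : 0 <= mx_abs_sum.
Proof. by do 2![apply: sumr_ge0 => ? _]. Qed.

Lemma normr_exprmx_le k i j : `|(G ^+ k) i j| <= mx_abs_sum ^+ k.
Proof.
elim: k i j => [|k IHk] i j.
  by rewrite expr0 !mxE; case: (i == j); rewrite ?normr1 ?normr0.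
rewrite exprS -mulmxE mxE exprS; apply: le_trans (ler_norm_sum _ _ _) _.
apply: le_trans (_ : \sum_l `|G i l| * mx_abs_sum ^+ k <= _).
  by apply: ler_sum => l _; rewrite normrM ler_wpM2l.
rewrite -mulr_suml ler_wpM2r ?exprn_ge0 ?mx_abs_sum_ge0 //.
rewrite /mx_abs_sum [leRHS](bigD1 i) //= lerDl.
by do 2![apply: sumr_ge0 => ? _].
Qed.

Lemma expm_coef_cvg m i j t : cvgn (pseries (expm_coef m i j) t).
Proof.
apply: normed_cvg; rewrite /normed_series_of /=.
apply: (@series_le_cvg _ _ (mx_abs_sum ^+ m *: exp_coeff (mx_abs_sum * `|t|))) => //.
- move=> k; rewrite /exp_coeff /= mulr_ge0 ?exprn_ge0 ?mx_abs_sum_ge0 //.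
  by rewrite divr_ge0 // exprn_ge0 // mulr_ge0 ?mx_abs_sum_ge0.
- move=> k; rewrite /exp_coeff /= /expm_coef normrM normrX normrM normfV.
  rewrite [`|k`!%:R|]ger0_norm //.
  have -> : (mx_abs_sum ^+ m *: exp_coeff (mx_abs_sum * `|t|)) k
      = mx_abs_sum ^+ (k + m) / k`!%:R * `|t| ^+ k.
    transitivity (mx_abs_sum ^+ m * ((mx_abs_sum * `|t|) ^+ k / k`!%:R)) => //.
    by rewrite exprMn exprD; ring.
  by rewrite ler_wpM2r ?exprn_ge0 // ler_wpM2r ?invr_ge0 // normr_exprmx_le.
- exact/is_cvg_seriesZ/is_cvg_series_exp_coeff.
Qed.

Lemma expm_entryE t i j : expm G t i j = limn (pseries (expm_coef 0 i j) t).
Proof.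
rewrite mxE; suff -> : (fun N : nat => (\sum_(k < N) (t ^+ k / k`!%:R *: G ^+ k)) i j)
    = pseries (expm_coef 0 i j) t by [].
apply/funext => N; rewrite summxE /pseries /series /= big_mkord; apply: eq_bigr => k _.
by rewrite mxE /expm_coef addn0; ring.
Qed.

Lemma pseries_diffs_expm_coef m i j : pseries_diffs (expm_coef m i j) = expm_coef m.+1 i j.
Proof.
apply/funext => k; rewrite /pseries_diffs /expm_coef addSnnS factS natrM invfM.
by rewrite mulrCA mulVKf // pnatr_eq0.
Qed.

Lemma pseries_expm_coefS m i j t :
  pseries (expm_coef m.+1 i j) t = fun N => \sum_l G i l * pseries (expm_coef m l j) t N.
Proof.
apply/funext => N; rewrite /pseries /series /=.
under eq_bigr => k _ do rewrite /expm_coef addnS exprS -mulmxE mxE !mulr_suml.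
rewrite exchange_big /=; apply: eq_bigr => l _; rewrite mulr_sumr.
by apply: eq_bigr => k _; rewrite !mulrA.
Qed.

Lemma is_derive_expm_entry t i j :
  is_derive t (1 : R) (fun s => expm G s i j) ((G *m expm G t) i j).
Proof.
under [fun s => _]funext do rewrite expm_entryE.
have := @pseries_snd_diffs R (expm_coef 0 i j) (`|t| + 1) t (@expm_coef_cvg _ _ _ _).
rewrite !pseries_diffs_expm_coef.
move=> /(_ (@expm_coef_cvg _ _ _ _) (@expm_coef_cvg _ _ _ _)).
rewrite [`|_ + 1|]ger0_norm ?addr_ge0 // ltrDl ltr01 => /(_ isT) /is_derive_eq; apply.
rewrite pseries_expm_coefS mxE; under [RHS]eq_bigr do rewrite expm_entryE.
apply: cvg_lim => //; apply: cvg_big => [|l _]; first exact: add_continuous.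
by apply: cvgMr; apply: (@expm_coef_cvg _ _ _ _).
Qed.

Lemma is_derive_expm_mulmx t (x : 'cV[R]_n) i :
  is_derive t (1 : R) (fun s => (expm G s *m x) i 0) ((G *m (expm G t *m x)) i 0).
Proof.
have -> : (fun s => (expm G s *m x) i 0) = \sum_j (x j 0 \*: (fun s => expm G s i j)).
  by rewrite fct_sumE; apply/funext => s; rewrite mxE; apply: eq_bigr => j _; rewrite mulrC.
rewrite mulmxA mxE.
under [X in is_derive _ _ _ X]eq_bigr do rewrite mulrC.
by apply: is_derive_sum => j; apply: is_deriveZ; exact: is_derive_expm_entry.
Qed.

Lemma expm0 : expm G 0 = 1%:M.
Proof.
apply/matrixP => i j; rewrite mxE; apply: cvg_lim => //.
apply: cvg_near_cst; exists 1%N => // -[|N] //= _.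
rewrite big_ord_recl /= expr0 mul1r fact0 invr1 expr0 big1 ?addr0 ?scale1r //.
by move=> k _; rewrite expr0n /= mul0r scale0r.
Qed.

Lemma expm_trmx t : expm G^T t = (expm G t)^T.
Proof.
apply/matrixP => i j; rewrite !mxE.
suff -> : (fun N : nat => (\sum_(k < N) (t ^+ k / k`!%:R *: G^T ^+ k)) i j)
    = (fun N : nat => (\sum_(k < N) (t ^+ k / k`!%:R *: G ^+ k)) j i) by [].
by apply/funext => N; rewrite !summxE; apply: eq_bigr => k _; rewrite !mxE trmxX mxE.
Qed.

End MatrixExponential.

Lemma is_derive_qform (R : realType) n (Q : 'M[R]_n) (y : R -> 'cV[R]_n) (dy : 'cV[R]_n) t :
  (forall i, is_derive t (1 : R) (fun s => y s i 0) (dy i 0)) ->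
  is_derive t (1 : R) (fun s => qform Q (y s))
    ((dy^T *m Q *m y t) 0 0 + ((y t)^T *m Q *m dy) 0 0).
Proof.
move=> dy_i.
have bilinE (u v : 'cV[R]_n) : (u^T *m Q *m v) 0 0 = \sum_i \sum_j Q i j * u i 0 * v j 0.
  rewrite mxE; under eq_bigr do rewrite mxE mulr_suml.
  rewrite exchange_big; apply: eq_bigr => i _; apply: eq_bigr => j _.
  by rewrite !mxE; ring.
have -> : (fun s => qform Q (y s))
    = \sum_i \sum_j ((Q i j \*: (fun s => y s i 0)) * (fun s => y s j 0)).
  apply/funext => s; rewrite /qform bilinE !fct_sumE; apply: eq_bigr => i _.
  by rewrite !fct_sumE.
rewrite !bilinE -big_split /=; apply: is_derive_sum => i.
rewrite -big_split /=; apply: is_derive_sum => j.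
apply: is_derive_eq (is_deriveM (is_deriveZ (Q i j) (dy_i i)) (dy_i j)) _.
by transitivity (Q i j * y t i 0 * dy j 0 + y t j 0 * (Q i j * dy i 0)); [|ring].
Qed.

Lemma is_derive_expRM (R : realType) (k s : R) :
  is_derive s (1 : R) (fun s => expR (k * s)) (expR (k * s) * k).
Proof.
have lin : is_derive s (1 : R) (fun s => k * s) k.
  have -> : (fun s => k * s) = k \*: id by [].
  by apply: is_derive_eq; rewrite /GRing.scale /= mulr1.
exact: is_derive1_comp.
Qed.

Lemma le0_ndecr_exp_decay (R : realType) (h dh : R -> R) K b : 0 < b ->
  (forall t, is_derive t (1 : R) h (dh t)) -> (forall t, 0 <= t -> 0 <= dh t) ->
  (forall t, 0 <= t -> h t <= K * expR (- b * t)) -> h 0 <= 0.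
Proof.
move=> b_gt0 h' dh_ge0 h_decay.
have h_ndecr T : 0 <= T -> h 0 <= h T.
  rewrite le_eqVlt => /orP [/eqP <- //| T_gt0].
  have [c c0T hTE] := MVT T_gt0 (fun x _ => h' x)
    (derivable_within_continuous (fun x _ => @ex_derive _ _ _ _ _ _ _ (h' x))).
  rewrite -subr_ge0 hTE subr0 mulr_ge0 ?subr0 ?(ltW T_gt0) // dh_ge0 //.
  by move: c0T; rewrite in_itv /= => /andP [/ltW].
rewrite leNgt; apply/negP => h0_gt0.
have K_gt0 : 0 < K.
  by apply: lt_le_trans h0_gt0 _; have := h_decay 0 (lexx _); rewrite mulr0 expR0 mulr1.
(* at T := K / (b h(0)), 1 + b T <= exp (b T) gives K exp (- b T) < h(0) *)
pose T := K / (b * h 0).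
have T_ge0 : 0 <= T by rewrite divr_ge0 ?mulr_ge0 ?ltW.
have := le_trans (h_ndecr T T_ge0) (h_decay T T_ge0).
rewrite mulNr expRN ler_pdivlMr ?expR_gt0 //; apply/negP; rewrite -ltNge.
apply: lt_le_trans (_ : h 0 * (1 + b * T) <= _); last by rewrite ler_wpM2l ?expR_ge1Dx ?ltW.
have -> : b * T = K / h 0 by rewrite /T mulrCA invfM mulVKf ?gt_eqF.
by rewrite mulrDr mulr1 mulrCA mulfV ?gt_eqF // mulr1 ltrDr.
Qed.

(* The hypothesis [0 < t2 -> 0 < s] is needed only because [x / 0 = 0] makes the bound vanish
   when [s = 0]. *)
Lemma ler_ratio_bounds (R : realFieldType) (t1 t2 c F1 F2 a s : R) :
  0 <= c -> 0 <= F1 -> 0 <= F2 -> 0 <= a -> 0 <= t2 -> (0 < t2 -> 0 < s) ->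
  t1 <= c * F1 -> t2 <= c * F2 -> s ^+ 2 * F2 <= 2 * a * t2 ->
  t1 / t2 <= 2 * a * c * F1 / (s ^+ 2 * F2).
Proof.
move=> c_ge0 F1_ge0 F2_ge0 a_ge0.
have rhs_ge0 : 0 <= 2 * a * c * F1 / (s ^+ 2 * F2).
  apply: divr_ge0; last exact: mulr_ge0 (sqr_ge0 _) F2_ge0.
  by rewrite mulr_ge0 // mulr_ge0 // mulr_ge0.
rewrite le_eqVlt => /orP [/eqP <- _ _ _ _|t2_gt0]; first by rewrite invr0 mulr0.
move=> /(_ t2_gt0) s_gt0 t1_le t2_le t2_ge.
have F2_gt0 : 0 < F2.
  rewrite lt_neqAle F2_ge0 andbT; apply/eqP => F20.
  by move: t2_le; rewrite -F20 mulr0 leNgt t2_gt0.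
have sF2_gt0 : 0 < s ^+ 2 * F2 by rewrite mulr_gt0 ?exprn_gt0.
rewrite ler_pdivrMr // mulrAC ler_pdivlMr //.
have := ler_wpM2l (mulr_ge0 c_ge0 F1_ge0) t2_ge.
have := ler_wpM2r (ltW sF2_gt0) t1_le.
nra.
Qed.

Section LyapunovBounds.
Variables (R : realType) (n : nat) (A P B : 'M[R]_n) (M alpha : R).
Hypothesis lyapP : A *m P + P *m A^T + B *m B^T = 0.
Hypothesis alpha_gt0 : 0 < alpha.
Hypothesis expm_decay : forall t, 0 <= t -> specnorm (expm A t) <= M * expR (- alpha * t).

Lemma vnorm_flow_le t z : 0 <= t -> vnorm (expm A^T t *m z) <= M * expR (- alpha * t) * vnorm z.
Proof.
move=> t_ge0; rewrite expm_trmx; apply: le_trans (vnorm_mulTmx_le_spec _ _) _.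
by rewrite ler_wpM2r ?vnorm_ge0 ?expm_decay.
Qed.

Section Flow.
Variable x : 'cV[R]_n.

Let y s := expm A^T s *m x.

Let y0 : y 0 = x.
Proof. by rewrite /y expm0 mul1mx. Qed.

Lemma is_derive_qform_flow Q s :
  is_derive s (1 : R) (fun s => qform Q (y s)) (qform (A *m Q + Q *m A^T) (y s)).
Proof.
apply: is_derive_eq; first by apply: is_derive_qform => i; exact: is_derive_expm_mulmx.
by rewrite qformD /qform trmx_mul trmxK !mulmxA.
Qed.

Lemma sqr_vnorm_flow_le s : 0 <= s ->
  vnorm (y s) ^+ 2 <= M ^+ 2 * vnorm x ^+ 2 * expR (- (2 * alpha) * s).
Proof.
move=> s_ge0; have y_le := vnorm_flow_le x s_ge0.
have -> : expR (- (2 * alpha) * s) = expR (- alpha * s) ^+ 2.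
  by rewrite -expRM_natl; congr expR; ring.
rewrite [leRHS](_ : _ = (M * expR (- alpha * s) * vnorm x) ^+ 2); last by ring.
by rewrite lerXn2r ?nnegrE ?vnorm_ge0 ?(le_trans (vnorm_ge0 _) y_le).
Qed.

Lemma qform_flow_le Q s : 0 <= s ->
  qform Q (y s) <= frobnorm Q * (M ^+ 2 * vnorm x ^+ 2) * expR (- (2 * alpha) * s).
Proof.
move=> s_ge0; apply: le_trans (qform_le_frob _ _) _.
by rewrite -mulrA ler_wpM2l ?frobnorm_ge0 ?sqr_vnorm_flow_le.
Qed.

Lemma lyap_qform_le :
  qform P x <= specnorm B ^+ 2 * M ^+ 2 / (2 * alpha) * vnorm x ^+ 2.
Proof.
set c := _ * vnorm x ^+ 2.
have c_ge0 : 0 <= c.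
  apply: mulr_ge0 (sqr_ge0 _) ; apply: divr_ge0; first by rewrite mulr_ge0 ?sqr_ge0.
  by rewrite mulr_ge0 ?ltW.
pose e s := expR (- (2 * alpha) * s).
have lyapE : A *m P + P *m A^T = - (B *m B^T) by apply/eqP; rewrite -addr_eq0 lyapP.
suff : qform P (y 0) - c * e 0 <= 0 by rewrite y0 /e mulr0 expR0 mulr1 subr_le0.
apply: (@le0_ndecr_exp_decay _ (fun s => qform P (y s) - c * e s)
  (fun s => qform (A *m P + P *m A^T) (y s) - c * (e s * - (2 * alpha)))
  (frobnorm P * (M ^+ 2 * vnorm x ^+ 2)) (2 * alpha)).
- by rewrite mulr_gt0.
- move=> s; apply: is_deriveB; first exact: is_derive_qform_flow.
  exact/is_deriveZ/is_derive_expRM.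
- move=> s s_ge0; rewrite lyapE qformN qform_mul_trmx !mulrN opprK addrC subr_ge0.
  have -> : c * (e s * (2 * alpha)) = specnorm B ^+ 2 * (M ^+ 2 * vnorm x ^+ 2 * e s).
    by rewrite /c; field; rewrite gt_eqF ?mulr_gt0.
  apply: le_trans (_ : (specnorm B * vnorm (y s)) ^+ 2 <= _).
    by rewrite lerXn2r ?nnegrE ?mulr_ge0 ?vnorm_ge0 ?specnorm_ge0 ?vnorm_mulTmx_le_spec.
  by rewrite exprMn ler_wpM2l ?sqr_ge0 ?sqr_vnorm_flow_le.
- move=> t t_ge0; apply: le_trans (qform_flow_le P t_ge0).
  by rewrite gerBl mulr_ge0 ?expR_ge0.
Qed.

Lemma lyap_qform_ge c k s : 0 <= c -> 0 <= k -> 0 <= s ->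
  (forall z, s * vnorm z <= vnorm (B^T *m z)) -> 2 * c * specnorm A <= k * s ^+ 2 ->
  c * vnorm x ^+ 2 <= k * qform P x.
Proof.
move=> c_ge0 k_ge0 s_ge0 sB_le cA_le.
pose Q := c *: 1%:M - k *: P.
have QE z : qform Q z = c * vnorm z ^+ 2 - k * qform P z.
  by rewrite qformD qformN !qformZ qform1.
have dQE : A *m Q + Q *m A^T = c *: (A + A^T) + k *: (B *m B^T).
  have lyapE : A *m P + P *m A^T = - (B *m B^T) by apply/eqP; rewrite -addr_eq0 lyapP.
  rewrite mulmxBr mulmxBl -!scalemxAr -!scalemxAl mulmx1 mul1mx.
  by rewrite -[B *m B^T]opprK -lyapE scalerN !scalerDr opprD addrACA.
rewrite -subr_le0 -QE -y0.
apply: (le0_ndecr_exp_decay (h := fun s => qform Q (y s)) (b := 2 * alpha)).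
- by rewrite mulr_gt0.
- exact: is_derive_qform_flow.
- move=> t _; rewrite dQE qformD !qformZ qformD qform_trmx qform_mul_trmx.
  have yAy_ge := qform_ge_spec A (y t).
  have sBy_ge : s ^+ 2 * vnorm (y t) ^+ 2 <= vnorm (B^T *m y t) ^+ 2.
    by rewrite -exprMn lerXn2r ?nnegrE ?mulr_ge0 ?vnorm_ge0.
  have ytA : 0 <= vnorm (y t) ^+ 2 by rewrite sqr_ge0.
  nra.
- exact: qform_flow_le.
Qed.

End Flow.

Lemma lyap_mxtrace_ratio_le m1 m2 (C1 : 'M[R]_(m1, n)) (C2 : 'M[R]_(m2, n)) :
  B \in unitmx ->
  \tr (C1 *m P *m C1^T) / \tr (C2 *m P *m C2^T)
  <= M ^+ 2 * specnorm A * specnorm B ^+ 2 / (sigma_min B ^+ 2 * alpha)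
     * (frobnorm C1 ^+ 2 / frobnorm C2 ^+ 2).
Proof.
move=> B_unit; set a := specnorm A; set s := sigma_min B.
set c := specnorm B ^+ 2 * M ^+ 2 / (2 * alpha).
have c_ge0 : 0 <= c.
  by apply: divr_ge0; [exact: mulr_ge0 (sqr_ge0 _) (sqr_ge0 _) | rewrite mulr_ge0 ?ltW].
have P_ge c' k z : 0 <= c' -> 0 <= k -> 2 * c' * a <= k * s ^+ 2 ->
    c' * vnorm z ^+ 2 <= k * qform P z.
  move=> c'_ge0 k_ge0 cA_le; apply: (lyap_qform_ge z c'_ge0 k_ge0 (sigma_min_ge0 B)) => //.
  by move=> w; apply: sigma_min_le_trmx.
have P_ge0 z : 0 * vnorm z ^+ 2 <= 1 * qform P z.
  by apply: P_ge; rewrite ?ler01 // mulr0 mul0r mul1r sqr_ge0.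
have s_gt0 : 0 < \tr (C2 *m P *m C2^T) -> 0 < s.
  move=> tr_gt0; apply: sigma_min_gt0 B_unit _; rewrite lt0n; apply: contraTneq tr_gt0 => n0.
  rewrite (_ : C2 = 0) ?mul0mx ?mxtrace0 ?ltxx //.
  by apply/matrixP => i j; move: (ltn_ord j); rewrite {2}n0.
apply: le_trans (@ler_ratio_bounds _ _ _ c (frobnorm C1 ^+ 2) (frobnorm C2 ^+ 2) a s
  _ _ _ _ _ s_gt0 _ _ _) _.
- exact: c_ge0.
- exact: sqr_ge0.
- exact: sqr_ge0.
- exact: specnorm_ge0.
- by have := mxtrace_qform_ge C2 P_ge0; rewrite mul0r mul1r.
- by apply: mxtrace_qform_le => z; apply: lyap_qform_le.
- by apply: mxtrace_qform_le => z; apply: lyap_qform_le.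
- apply: mxtrace_qform_ge => z; apply: P_ge; first exact: sqr_ge0.
    by rewrite mulr_ge0 ?specnorm_ge0.
  by rewrite mulrAC.
rewrite le_eqVlt; apply/orP; left; apply/eqP.
clearbody a s; rewrite /c; move: (s ^+ 2) (frobnorm C2 ^+ 2) => s2 F2.
by rewrite !invfM; move: F2^-1 s2^-1 => iF iS; field; rewrite lt0r_neq0.
Qed.

End LyapunovBounds.

Local Close Scope classical_set_scope.
Unset Implicit Arguments.

Theorem theorem2 (R : realType) (nx nu ny nyp : nat)
  (Ap : 'M[R]_nx) (Bp : 'M[R]_(nx, nu)) (Bw Bwh : 'M[R]_nx)
  (Cmo : 'M[R]_(ny, nx)) (Cpo : 'M[R]_(nyp, nx)) (Dpo : 'M[R]_(nyp, nu))
  (K : 'M[R]_(nx, ny)) (L : 'M[R]_(nu, nx))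
  (Hctrb : controllable Ap Bp) (Hobsv : observable Ap Cmo)
  (HB : \rank (B_cl Bw Bwh) = (nx + nx)%N)
  (Rm : 'M[R]_ny) (HRs : hurwitz (A_R Ap Bp Cmo K L Rm))
  (alpha : R) (Halpha : 0 < alpha)
  (Heig : forall z : R[i], is_eigenvalue (A_R Ap Bp Cmo K L Rm) z ->
            complex.Re z <= - alpha)
  (Mst : R)
  (HM : forall t : R, 0 <= t ->
     specnorm (expm (A_R Ap Bp Cmo K L Rm) t) <= Mst * expR (- alpha * t))
  (P : 'M[R]_(nx + nx))
  (HP : A_R Ap Bp Cmo K L Rm *m P + P *m (A_R Ap Bp Cmo K L Rm)^T
          + B_cl Bw Bwh *m (B_cl Bw Bwh)^T = 0) :
  let AR := A_R Ap Bp Cmo K L Rm in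
  let B := B_cl Bw Bwh in
  let Cp := C_p Cpo Dpo L in
  let CrR := C_rR Cmo Rm in
  let ER := (1%:M - Rm) *m Cmo in
  let Cr : 'M[R]_(ny, nx + nx) := row_mx 0 Cmo in
  \tr (Cp *m P *m Cp^T) / \tr (CrR *m P *m CrR^T)
  <= 8 * (Mst ^+ 2 * specnorm AR * specnorm B ^+ 2)
         / (sigma_min B ^+ 2 * alpha)
       * (frobnorm Cp ^+ 2 / (frobnorm ER ^+ 2 + frobnorm Cr ^+ 2)).
Proof.
cbv zeta; set B := B_cl _ _; set CrR := C_rR _ _; set ER := _ *m Cmo; set Cr := row_mx 0 Cmo.
have B_unit : B \in unitmx by rewrite -row_free_unit /row_free HB.
have frob_CrR : frobnorm CrR ^+ 2 = frobnorm ER ^+ 2 + frobnorm Cr ^+ 2.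
  rewrite !frobnorm_row_mx frobnorm0 expr0n add0r -frobnormN.
  by rewrite /ER -mulNmx opprB.
rewrite -frob_CrR.
apply: le_trans (lyap_mxtrace_ratio_le HP Halpha HM (C_p Cpo Dpo L) CrR B_unit) _.
set bound := _ / _ * (_ / _).
rewrite (_ : 8 * _ / _ * _ = 8 * bound) ?ler_peMl ?ler1n //; last by rewrite /bound !mulrA.
apply: mulr_ge0; last exact: divr_ge0 (sqr_ge0 _) (sqr_ge0 _).
apply: divr_ge0; last exact: mulr_ge0 (sqr_ge0 _) (ltW Halpha).
exact: mulr_ge0 (mulr_ge0 (sqr_ge0 _) (specnorm_ge0 _)) (sqr_ge0 _).
Qed.
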